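(* For all $n\in\mathbb{N}$ the bistatistic $(\operatorname{veh}',\operatorname{SIVEH})$ is Euler–Mahonian on $\mathfrak{S}_n$, i.e. $$\sum_{\pi\in\mathfrak{S}_n}s^{\operatorname{veh}'(\pi)}q^{\operatorname{SIVEH}(\pi)}=\sum_{\pi\in\mathfrak{S}_n}s^{\operatorname{des}(\pi)}q^{\operatorname{MAJ}(\pi)}.$$
   Context: For $\pi=a_1\cdots a_n\in\mathfrak{S}_n$: $\operatorname{Des}(\pi)=\{i\in[n-1]:a_i>a_{i+1}\}$, $\operatorname{des}(\pi)=|\operatorname{Des}(\pi)|$, $\operatorname{MAJ}(\pi)=\sum_{i\in\operatorname{Des}(\pi)}i$. The increasing unordered tree $T'(\pi)$ has root labeled $0$: if $b$ is a right-to-left minimum of $\pi$ then $b$ is a child of the root; otherwise $b$ is a child of the leftmost letter $a$ to the right of $b$ with $a<b$. $\operatorname{veh}'(\pi)$ is the number of non-root vertices of even height in $T'(\pi)$ (root at height $0$), $\operatorname{EV}(\pi)$ is the set of indices $i$ such that $a_i$ has even height, and $\operatorname{SIVEH}(\pi)=\sum_{i\in\operatorname{EV}(\pi)}i$. *)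

From mathcomp Require Import all_boot all_algebra all_fingroup.
Set Implicit Arguments. Unset Strict Implicit. Unset Printing Implicit Defensive.

(* Conventions: a permutation pi : 'S_n (of {0..n-1}) is identified with the
   word a_1 ... a_n where a_i = (pi (i-1)) + 1 \in [n].  Internally we use
   0-based positions k = i - 1 on the word  w = word pi  (a seq nat). *)

Definition word n (pi : 'S_n) : seq nat := [seq (pi i).+1 | i <- enum 'I_n].

Section Stats.
Variable w : seq nat.
Local Notation a k := (nth 0 w k).
Local Notation n := (size w).

Definition Des : seq nat := [seq k.+1 | k <- iota 0 n.-1 & a k > a k.+1].
Definition des : nat := size Des.
Definition MAJ : nat := \sum_(i <- Des) i.

(* Parent in T'(pi) of the letter at (0-based) position k:
   None = the root 0 (k is a right-to-left minimum);
   Some j = position of the leftmost letter to the right of a_k smaller than a_k. *)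
Definition parent_pos (k : nat) : option nat :=
  let j := find (fun j => (k < j) && (a j < a k)) (iota 0 n) in
  if j < n then Some j else None.

(* Height (root at height 0); the fuel n suffices since parents lie strictly
   to the right. *)
Fixpoint height_fuel (fuel k : nat) : nat :=
  match fuel with
  | 0 => 0
  | f.+1 => match parent_pos k with
            | None => 1
            | Some j => (height_fuel f j).+1
            end
  end.
Definition height (k : nat) : nat := height_fuel n k.

Definition EV : seq nat := [seq k.+1 | k <- iota 0 n & ~~ odd (height k)].
Definition veh' : nat := size EV.
Definition SIVEH : nat := \sum_(i <- EV) i.
End Stats.

From mathcomp Require Import all_boot all_algebra all_fingroup zify ring.
Set Implicit Arguments. Unset Strict Implicit. Unset Printing Implicit Defensive.

(* Every word of length m+1 is uniquely [prepend v w] = v followed by w with its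
   letters >= v raised by one, for w of length m and v in [1, m+1].  Prepending
   shifts Des and EV up by one and adds the index 1 under a "marking" condition:
   for Des, that v exceeds the first letter of w; for EV, that the new letter
   (whose parent in T' is the first letter of w below v) has even height.  In both
   cases a statistic T on words (the first letter, resp. the number of v for
   which the new letter has odd height) makes v |-> T (prepend v w) a permutation
   of [1, m+1], with marking exactly when T increases.  Hence the generating
   functions of (T, size, sum) over both index sets obey the same recursion, and
   forgetting T gives the theorem. *)

Lemma nth_map0 (f : nat -> nat) (w : seq nat) j :
  f 0 = 0 -> nth 0 (map f w) j = f (nth 0 w j).
Proof.
move=> f0; have [jw|wj] := ltnP j (size w); first by rewrite (nth_map 0).
by rewrite !nth_default ?size_map.
Qed.

Section Relabel.
Variable f : nat -> nat.
Hypotheses (f_mono : {mono f : x y / x < y}) (f0 : f 0 = 0).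

Lemma parent_pos_map w k : parent_pos (map f w) k = parent_pos w k.
Proof.
rewrite /parent_pos size_map (@eq_find _ _ (fun j => (k < j) && (nth 0 w j < nth 0 w k))) //.
by move=> j; rewrite !nth_map0 // f_mono.
Qed.

Lemma height_map w k : height (map f w) k = height w k.
Proof.
rewrite /height size_map; elim: (size w) k => [//|fu IH] k /=.
by rewrite parent_pos_map; case: parent_pos => // j; rewrite IH.
Qed.

Lemma EV_map w : EV (map f w) = EV w.
Proof. by rewrite /EV size_map; congr map; apply: eq_filter => k; rewrite height_map. Qed.

Lemma Des_map w : Des (map f w) = Des w.
Proof. by rewrite /Des size_map; congr map; apply: eq_filter => k; rewrite !nth_map0 // f_mono. Qed.

End Relabel.

Lemma find_iota_nth (p : pred nat) w :
  find (fun j => p (nth 0 w j)) (iota 0 (size w)) = find p w.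
Proof. by rewrite -(find_map (nth 0 w) p) -/(mkseq _ _) mkseq_nth. Qed.

Lemma iota1_map_succ m : iota 1 m = map S (iota 0 m).
Proof. exact: iotaDl 1 0 m. Qed.

Lemma parent_pos_lt w k j : parent_pos w k = Some j -> k < j < size w.
Proof.
rewrite /parent_pos; set p := (fun j => _); case: ifP => // jw [<-].
have := @nth_find _ 0 p (iota 0 (size w)); rewrite has_find size_iota => /(_ jw).
by rewrite /p nth_iota // add0n => /andP[-> _]; rewrite jw.
Qed.

Lemma parent_pos_cons x s k : parent_pos (x :: s) k.+1 = omap S (parent_pos s k).
Proof.
rewrite /parent_pos /= iota1_map_succ find_map ltnS.
by rewrite (@eq_find _ _ (fun j => (k < j) && (nth 0 s j < nth 0 s k))) //; case: ifP.
Qed.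

Lemma height_fuel_cons x s fu k : height_fuel (x :: s) fu k.+1 = height_fuel s fu k.
Proof.
elim: fu k => [//|fu IH] k /=; rewrite parent_pos_cons.
by case: parent_pos => //= j; rewrite IH.
Qed.

(* Parents lie strictly to the right, so [size s - k] steps of fuel suffice. *)
Lemma height_fuel_enough s fu fu' k :
  size s - k <= fu -> size s - k <= fu' -> 0 < fu -> 0 < fu' ->
  height_fuel s fu k = height_fuel s fu' k.
Proof.
elim: fu fu' k => [//|fu IH] [//|fu'] k le_fu le_fu' _ _ /=.
case Ep: parent_pos => [j|//]; have /andP[kj js] := parent_pos_lt Ep.
congr S; apply: IH; lia.
Qed.

Lemma height_cons x s k : k < size s -> height (x :: s) k.+1 = height s k.
Proof. by move=> ks; rewrite /height height_fuel_cons; apply: height_fuel_enough => /=; lia. Qed.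

Definition parent_height (w : seq nat) (x : nat) : nat :=
  let j := find (fun y => y < x) w in if j < size w then height w j else 0.

Lemma height_head x s : height (x :: s) 0 = (parent_height s x).+1.
Proof.
rewrite /height /= /parent_pos /= iota1_map_succ find_map.
rewrite (@eq_find _ _ (fun j => nth 0 s j < x)) // (find_iota_nth (fun y => y < x)).
by rewrite /parent_height ltnS; case: ifP => // _; rewrite height_fuel_cons.
Qed.

Definition cons_indices (b : bool) (X : seq nat) : seq nat :=
  (if b then [:: 1] else [::]) ++ map S X.

Lemma EV_cons x s : EV (x :: s) = cons_indices (odd (parent_height s x)) (EV s).
Proof.
rewrite /EV /= height_head /= iota1_map_succ filter_map negbK.
rewrite (@eq_in_filter _ _ (fun k => ~~ odd (height s k))); last first.
  by move=> k; rewrite mem_iota => /andP[_ ks]; rewrite /preim /= height_cons.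
by rewrite /cons_indices; case: ifP.
Qed.

Lemma Des_cons x s : Des (x :: s) = cons_indices (head x s < x) (Des s).
Proof.
case: s => [|y s]; first by rewrite /Des /= ltnn.
by rewrite /Des /= iota1_map_succ filter_map /cons_indices; case: ifP.
Qed.

Definition prepend (v : nat) (w : seq nat) : seq nat := v :: map (bump v) w.

Lemma ltn_bump2 v : {mono bump v : x y / x < y}.
Proof. by move=> x y; rewrite !ltnNge leq_bump2. Qed.

Lemma bump0 v : 0 < v -> bump v 0 = 0.
Proof. by case: v. Qed.

Lemma bump_ltn v x y : y <= v -> (bump v x < y) = (x < y).
Proof. by rewrite /bump; case: leqP => /=; lia. Qed.

Lemma parent_height_bump v w x :
  0 < v -> x <= v -> parent_height (map (bump v) w) x = parent_height w x.
Proof.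
move=> v0 xv; rewrite /parent_height find_map size_map.
rewrite (@eq_find _ _ (fun y => y < x)) => [|y]; last by rewrite /preim /= bump_ltn.
by rewrite height_map ?bump0 //; apply: ltn_bump2.
Qed.

Lemma parent_height_prepend_le v w x :
  0 < v -> x <= v -> parent_height (prepend v w) x = parent_height w x.
Proof.
move=> v0 xv; rewrite -(parent_height_bump w v0 xv) /parent_height /=.
by rewrite (ltnNge v x) xv /= ltnS; case: ifP => // lt_find; rewrite height_cons.
Qed.

Lemma parent_height_prepend_gt v w x :
  0 < v -> v < x -> parent_height (prepend v w) x = (parent_height w v).+1.
Proof.
by move=> v0 vx; rewrite {1}/parent_height /= vx /= height_head parent_height_bump.
Qed.

(* The number of [v] for which the first letter of [prepend v w] has odd height. *)
Definition odd_slots (w : seq nat) : nat :=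
  count (fun x => ~~ odd (parent_height w x)) (iota 1 (size w).+1).

Lemma count_iotaSr (b : pred nat) n :
  count b (iota 1 n.+1) = count b (iota 1 n) + b n.+1.
Proof. by rewrite -[n.+1]addn1 iotaD count_cat /= add1n addn0 addn1. Qed.

Lemma count_iota_leq (b : pred nat) m n :
  m <= n -> count b (iota 1 m) <= count b (iota 1 n).
Proof. by move=> mn; rewrite -(subnKC mn) iotaD count_cat leq_addr. Qed.

Lemma count_prefix_count (b : pred nat) n t :
  count (fun v => b v && (count b (iota 1 v) == t)) (iota 1 n)
  = (0 < t <= count b (iota 1 n)).
Proof.
elim: n => [|n IH]; first by case: t.
rewrite count_iotaSr IH count_iotaSr; case: (b n.+1) => /=; rewrite ?addn0 // addn1.
by case: (leqP t (count b (iota 1 n))) => tc; case: eqP => ct; lia.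
Qed.

Lemma count_if T (c p r : pred T) (s : seq T) :
  count (fun x => if c x then p x else r x) s
  = count (fun x => c x && p x) s + count (fun x => ~~ c x && r x) s.
Proof. by elim: s => //= x s ->; case: (c x) => /=; lia. Qed.

Section SlotRank.
Variables (b : pred nat) (N : nat).

Definition slot_rank (v : nat) : nat :=
  if b v then N.+1 - count b (iota 1 v) else count (predC b) (iota 1 v).

Lemma slot_rank_perm : perm_eq [seq slot_rank v | v <- iota 1 N] (iota 1 N).
Proof.
apply/allP => t _; apply/eqP; rewrite count_map count_uniq_mem ?iota_uniq // mem_iota.
rewrite (eq_count (a2 := fun v => if b v then N.+1 - count b (iota 1 v) == t
                                  else count (predC b) (iota 1 v) == t)); last first.
  by move=> v; rewrite /preim /= /slot_rank; case: (b v).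
rewrite count_if (count_prefix_count (predC b)).
rewrite (eq_in_count (a2 := fun v => b v && (count b (iota 1 v) == N.+1 - t))); last first.
  move=> v; rewrite mem_iota add1n ltnS => /andP[v1 vN].
  case bv: (b v); rewrite ?andTb ?andFb //.
  have : 0 < count b (iota 1 v) by rewrite -(prednK v1) count_iotaSr prednK // bv addn1.
  have := count_iota_leq b vN; have := count_size b (iota 1 N); rewrite size_iota.
  by move=> *; apply/eqP/eqP; lia.
rewrite (count_prefix_count b); have := count_predC b (iota 1 N); rewrite size_iota.
by case: (leqP t N) => tN; case: (leqP t (count (predC b) (iota 1 N))); lia.
Qed.

Lemma slot_rank_gt v : v \in iota 1 N ->
  (count (predC b) (iota 1 N) < slot_rank v) = b v.
Proof.
rewrite mem_iota add1n ltnS => /andP[_ vN]; rewrite /slot_rank.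
have := count_predC b (iota 1 N); rewrite size_iota.
have := count_iota_leq b vN; have := count_iota_leq (predC b) vN.
by case: (b v) => /=; lia.
Qed.

End SlotRank.

Lemma odd_slots_prepend v w : v \in iota 1 (size w).+1 ->
  odd_slots (prepend v w) = slot_rank (fun x => odd (parent_height w x)) (size w).+1 v.
Proof.
rewrite mem_iota add1n ltnS => /andP[v0 vw].
have vw2 : v <= (size w).+2 by apply: leqW.
rewrite /odd_slots /slot_rank.
have -> : size (prepend v w) = (size w).+1 by rewrite /= size_map.
rewrite -(subnKC vw2) iotaD count_cat add1n.
rewrite (eq_in_count (a2 := predC (fun x => odd (parent_height w x))) (s := iota 1 v)); last first.
  by move=> x; rewrite mem_iota add1n ltnS => /andP[_ xv]; rewrite parent_height_prepend_le.
rewrite (eq_in_count (a2 := fun=> odd (parent_height w v)) (s := iota v.+1 _)); last first.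
  by move=> x; rewrite mem_iota => /andP[vx _]; rewrite parent_height_prepend_gt //= negbK.
have := count_predC (fun x => odd (parent_height w x)) (iota 1 v); rewrite size_iota.
case: (odd (parent_height w v)) => /= ?.
- by rewrite count_predT size_iota; lia.
- by rewrite count_pred0 addn0.
Qed.

Definition prepend_coherent (T : seq nat -> nat) (X : seq nat -> seq nat) :=
  forall w, perm_eq [seq T (prepend v w) | v <- iota 1 (size w).+1] (iota 1 (size w).+1)
    /\ {in iota 1 (size w).+1, forall v,
          X (prepend v w) = cons_indices (T w < T (prepend v w)) (X w)}.

Lemma EV_prepend v w : 0 < v ->
  EV (prepend v w) = cons_indices (odd (parent_height w v)) (EV w).
Proof.
move=> v0; rewrite EV_cons parent_height_bump // EV_map //; [exact: ltn_bump2 | exact: bump0].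
Qed.

Lemma EV_prepend_coherent : prepend_coherent odd_slots EV.
Proof.
move=> w; split.
  rewrite (@eq_in_map _ _ _ (slot_rank (fun x => odd (parent_height w x)) (size w).+1) _).1.
    exact: slot_rank_perm.
  by move=> v /odd_slots_prepend.
move=> v vw; have v0 : 0 < v by move: vw; rewrite mem_iota => /andP[].
by rewrite EV_prepend // odd_slots_prepend // slot_rank_gt.
Qed.

Lemma Des_prepend_coherent : prepend_coherent (head 1) Des.
Proof.
move=> w; split; first by rewrite map_id.
move=> v; rewrite mem_iota add1n ltnS => /andP[v0 vw].
rewrite /prepend Des_cons Des_map ?bump0 //; last exact: ltn_bump2.
case: w vw => [|y w] /= vw; last by rewrite bump_ltn.
by rewrite ltnn; case: v v0 vw => [|[|]].
Qed.

Fixpoint perms (m : nat) : seq (seq nat) :=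
  if m is m'.+1 then [seq prepend v w | v <- iota 1 m, w <- perms m'] else [:: [::]].

Lemma permsS m : perms m.+1 = [seq prepend v w | v <- iota 1 m.+1, w <- perms m].
Proof. by []. Qed.

Lemma size_mem_perms m w : w \in perms m -> size w = m.
Proof.
elim: m w => [|m IH] w; first by rewrite inE => /eqP ->.
by rewrite permsS => /allpairsP [[v w'] [_ /IH sw' ->]]; rewrite /= size_map sw'.
Qed.

Lemma size_perms m : size (perms m) = m`!.
Proof. by elim: m => [//|m IH]; rewrite permsS size_allpairs size_iota IH factS. Qed.

Lemma mem_perms m w :
  uniq w -> size w = m -> all (fun x => 0 < x <= m) w -> w \in perms m.
Proof.
elim: m w => [|m IH] [|v w] //.
move=> /andP[vw uw] [sw] /andP[vm wm].
have ne_v y : y \in w -> y != v by apply: contraTneq => ->.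
have -> : v :: w = prepend v (map (unbump v) w).
  by rewrite /prepend -map_comp map_id_in // => y /ne_v; apply: unbumpK.
rewrite permsS; apply: allpairs_f; first by rewrite mem_iota; lia.
apply: IH; rewrite ?size_map //.
  rewrite map_inj_in_uniq // => y z /ne_v nyv /ne_v nzv eq_yz.
  by rewrite -(unbumpK nyv) -(unbumpK nzv) eq_yz.
apply/allP => _ /mapP [y yw ->]; have := allP wm y yw; have := ne_v y yw.
by rewrite /unbump; case: (ltnP v y) => /= vy /eqP; lia.
Qed.

Lemma word_inj n : injective (@word n).
Proof.
move=> p1 p2 /eq_in_map eq_w; apply/permP => i; apply/val_inj.
by have /succn_inj := eq_w i (mem_enum _ i).
Qed.

Lemma word_mem_perms n (pi : 'S_n) : word pi \in perms n.
Proof.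
apply: mem_perms; rewrite /word.
- by rewrite map_inj_uniq ?enum_uniq // => i j [/val_inj/perm_inj].
- by rewrite size_map size_enum_ord.
- by apply/allP => _ /mapP [i _ ->]; rewrite ltn_ord.
Qed.

Lemma perm_words_perms n : perm_eq [seq word pi | pi <- index_enum 'S_n] (perms n).
Proof.
have uniq_words : uniq [seq word pi | pi <- index_enum 'S_n].
  by rewrite map_inj_uniq ?index_enum_uniq //; apply: word_inj.
have sub_words : {subset [seq word pi | pi <- index_enum 'S_n] <= perms n}.
  by move=> _ /mapP [pi _ ->]; apply: word_mem_perms.
have le_size : size (perms n) <= size [seq word pi | pi <- index_enum 'S_n].
  by rewrite size_perms size_map -card_Sn cardT enumT /index_enum unlock.
apply: uniq_perm (leq_size_uniq uniq_words sub_words le_size) _ => //.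
exact: (uniq_min_size uniq_words sub_words le_size).2.
Qed.

Lemma big_words_perms (R : Type) (idx : R) (op : Monoid.com_law idx) n (F : seq nat -> R) :
  \big[op/idx]_(pi : 'S_n) F (word pi) = \big[op/idx]_(w <- perms n) F w.
Proof. by rewrite -(perm_big _ (perm_words_perms n)) big_map. Qed.

Import GRing.Theory.
Local Open Scope ring_scope.

Section RefinedGeneratingFunction.
Variables (R : comRingType) (q : R).

Definition index_weight (s : R) (X : seq nat) : R := s ^+ size X * q ^+ (\sum_(i <- X) i)%N.

Lemma index_weight_cons s b X :
  index_weight s (cons_indices b X) = index_weight (s * q) X * (if b then s * q else 1).
Proof.
rewrite /index_weight big_cat size_cat size_map big_map /=.
have -> : (\sum_(i <- X) i.+1 = \sum_(i <- X) i + size X)%N.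
  by rewrite -sum1_size -big_split /=; apply: eq_bigr => i _; rewrite addn1.
by case: b; rewrite /= ?big_cons ?big_nil !exprD exprMn; ring.
Qed.

Definition refined_gf (T : seq nat -> nat) (X : seq nat -> seq nat) m (F : nat -> R) s :=
  \sum_(w <- perms m) F (T w) * index_weight s (X w).

Lemma refined_gf1 T X m s :
  refined_gf T X m (fun=> 1) s = \sum_(w <- perms m) index_weight s (X w).
Proof. by apply: eq_bigr => w _; rewrite mul1r. Qed.

Lemma refined_gfS T X m F s : prepend_coherent T X ->
  refined_gf T X m.+1 F s = refined_gf T X m
    (fun t => \sum_(u <- iota 1 m.+1) F u * (if (t < u)%N then s * q else 1)) (s * q).
Proof.
move=> coh; rewrite /refined_gf permsS big_allpairs_dep exchange_big.
apply: eq_big_seq => w /size_mem_perms sw; rewrite big_distrl /=.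
have [perm_T mark_X] := coh w; rewrite sw in perm_T mark_X.
rewrite -[in RHS](perm_big _ perm_T) big_map; apply: eq_big_seq => v /mark_X ->.
by rewrite index_weight_cons mulrA mulrAC.
Qed.

Lemma refined_gf_eq T1 X1 T2 X2 :
  prepend_coherent T1 X1 -> prepend_coherent T2 X2 ->
  T1 [::] = T2 [::] -> X1 [::] = X2 [::] ->
  forall m F s, refined_gf T1 X1 m F s = refined_gf T2 X2 m F s.
Proof.
move=> coh1 coh2 eqT eqX; elim=> [|m IH] F s.
  by rewrite /refined_gf /= !big_seq1 eqT eqX.
by rewrite !refined_gfS // IH.
Qed.

End RefinedGeneratingFunction.

Theorem corollary8p2 (n : nat) (R : comRingType) (s q : R) :
  \sum_(pi : 'S_n) s ^+ veh' (word pi) * q ^+ SIVEH (word pi)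
  = \sum_(pi : 'S_n) s ^+ des (word pi) * q ^+ MAJ (word pi).
Proof.
rewrite (big_words_perms _ _ (fun w => s ^+ veh' w * q ^+ SIVEH w)).
rewrite (big_words_perms _ _ (fun w => s ^+ des w * q ^+ MAJ w)).
have := refined_gf_eq q EV_prepend_coherent Des_prepend_coherent erefl erefl n (fun=> 1) s.
by rewrite !refined_gf1.
Qed.
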